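(* Let $\mathcal{A}$ be the algebra associated to an $\mathbb{H}_{2n+1}$-structure on $\mathbb{P}V$ such that $T$ fixes every point of the boundary hyperplane $\mathbb{P}V'$. Then $2n+2\leq\dim\mathcal{A}\leq 3n+2$. If moreover the induced $\mathbb{G}_a^{2n}$-structure on $\mathbb{P}\widetilde V$ is tautological, then $\dim\mathcal{A}=2n+2$.
   Context: Work over $\mathbb{C}$, $n\ge1$. The Heisenberg group $\mathbb{H}_{2n+1}$ is $\mathbb{W}\times\mathbb{C}$ ($\mathbb{W}$ a $2n$-dimensional space with non-degenerate skew form $\omega$) with law $(w_1,t_1)(w_2,t_2)=(w_1+w_2,t_1+t_2+\tfrac12\omega(w_1,w_2))$; $T=(0,1)$, $\mathbb{I}=\mathbb{C}T$ its center. $V\cong\mathbb{C}^{2n+2}$. An $\mathbb{H}_{2n+1}$-structure on $\mathbb{P}V$ is an effective algebraic action with a dense open orbit; its boundary is a hyperplane $\mathbb{P}V'$. Regard $\mathbb{H}_{2n+1}$ as a subgroup of $\mathrm{Aut}(\mathbb{P}V)=\mathbb{P}\mathrm{GL}_{2n+2}(\mathbb{C})$, let $\pi:\mathrm{GL}_{2n+2}(\mathbb{C})\to\mathbb{P}\mathrm{GL}_{2n+2}(\mathbb{C})$ be the projection, and let $\mathcal{A}$ (the associated algebra) be the associative unital subalgebra of $\mathrm{Mat}_{2n+2}(\mathbb{C})$ generated by $\pi^{-1}(\mathbb{H}_{2n+1})$. For $o$ in the open orbit, $v$ is the point $\overline{\mathbb{I}\cdot o}\setminus\mathbb{I}\cdot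 o$, $\hat v$ represents it, and $\widetilde V=V/\mathbb{C}\hat v$; when $T$ fixes $\mathbb{P}V'$ pointwise, the action descends to a $\mathbb{G}_a^{2n}$-structure (effective action with dense open orbit) of $\mathbb{H}_{2n+1}/\mathbb{I}\cong\mathbb{G}_a^{2n}$ on $\mathbb{P}\widetilde V$, the induced structure. It is tautological if, in suitable coordinates on the group and homogeneous coordinates, it is $(a_1,\dots,a_{2n})\cdot[z_0,\dots,z_{2n}]=[z_0,z_1+a_1z_0,\dots,z_{2n}+a_{2n}z_0]$. *)

(* The ground field C is modelled as R[i] = complex R for
   R : realType (a complete archimedean ordered field, i.e. the reals). *)
From HB Require Import structures.
From mathcomp Require Import all_boot all_order all_algebra.
From mathcomp Require Import reals complex.
From mathcomp Require Import mpoly.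
Set Implicit Arguments.
Unset Strict Implicit.
Unset Printing Implicit Defensive.
Import Order.TTheory GRing.Theory Num.Theory.
Local Open Scope ring_scope.

Section Heisenberg.
Variables (R : realType) (n : nat).
Local Notation C := (R[i]).
Local Notation N := (n.*2.+2).

(* skew, non-degenerate form omega(w1,w2) = w1 Om w2^T on W = C^(2n) *)
Definition skew_nondeg (Om : 'M[C]_(n.*2)) : Prop :=
  Om^T = - Om /\ Om \in unitmx.

Definition heis := ('rV[C]_(n.*2) * C)%type.

Definition heis_mul (Om : 'M[C]_(n.*2)) (g h : heis) : heis :=
  (g.1 + h.1, g.2 + h.2 + 2^-1 * (g.1 *m Om *m h.1^T) 0 0).
Definition heis_one : heis := (0, 0).
Definition heisT : heis := (0, 1).

Definition heis_coord (g : heis) : 'I_(n.*2.+1) -> C :=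
  fun i => if (insub (val i) : option 'I_(n.*2)) is Some j
            then g.1 0 j else g.2.

(* --- projective space PV, points represented by nonzero column vectors --- *)
Definition proj_eq (x y : 'cV[C]_N) : Prop := exists c : C, c != 0 /\ y = c *: x.

Definition veval (p : mpoly.mpoly N C) (x : 'cV[C]_N) : C :=
  mpoly.meval (fun i => x i 0) p.

Definition homogeneous (p : mpoly.mpoly N C) : Prop :=
  exists d : nat, p \is mpoly.ishomog1 d mpoly.mdeg.

Definition zcl (S : 'cV[C]_N -> Prop) (x : 'cV[C]_N) : Prop :=
  x != 0 /\ forall p, homogeneous p ->
    (forall y, S y -> y != 0 -> veval p y = 0) -> veval p x = 0.

Definition zclosed (Z : 'cV[C]_N -> Prop) : Prop :=
  exists F : mpoly.mpoly N C -> Prop, (forall p, F p -> homogeneous p) /\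
    forall x, x != 0 -> (Z x <-> forall p, F p -> veval p x = 0).

Variables (Om : 'M[C]_(n.*2)) (rho : heis -> 'M[C]_N).

Definition orbit (o x : 'cV[C]_N) : Prop := exists g, proj_eq (rho g *m o) x.
Definition Iorbit (o x : 'cV[C]_N) : Prop :=
  exists t : C, proj_eq (rho (0, t) *m o) x.

Definition open_dense_orbit (o : 'cV[C]_N) : Prop :=
  o != 0 /\ zclosed (fun x => ~ orbit o x) /\ (forall x, x != 0 -> zcl (orbit o) x).

(* An H_{2n+1}-structure on PV: an effective algebraic action (given by a
   polynomial linear representation lifting it) with a dense open orbit. *)
Definition Hstructure : Prop :=
  [/\ rho heis_one = 1%:M,
      (forall g h, rho (heis_mul Om g h) = rho g *m rho h),
      (exists P : 'I_N -> 'I_N -> mpoly.mpoly n.*2.+1 C,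
          forall g i j, rho g i j = mpoly.meval (heis_coord g) (P i j)),
      (forall g, (exists c : C, rho g = c%:M) -> g = heis_one) &
      (exists o, open_dense_orbit o)].

Definition T_fixes_boundary (o : 'cV[C]_N) : Prop :=
  forall x, x != 0 -> ~ orbit o x -> proj_eq x (rho heisT *m x).

(* A is the associative unital subalgebra of Mat_N(C) generated by
   pi^{-1}(H) = { c rho(g) | c <> 0 } *)
Definition assoc_alg_closed (A : {vspace 'M[C]_N}) : Prop :=
  [/\ (1%:M \in A),
      (forall a b, a \in A -> b \in A -> a *m b \in A) &
      (forall g (c : C), c != 0 -> c *: rho g \in A)].
Definition is_assoc_alg (A : {vspace 'M[C]_N}) : Prop :=
  assoc_alg_closed A /\ forall B, assoc_alg_closed B -> (A <= B)%VS.

(* the tautological G_a^{2n}-action matrix on C^{2n+1} (coordinate 0 = z_0) *)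
Definition taut (a : 'rV[C]_(n.*2)) : 'M[C]_(n.*2.+1) :=
  1%:M + \matrix_(i, j) (if j == ord0 then
                          (if unlift ord0 i is Some k then a 0 k else 0) else 0).

(* The induced G_a^{2n}-structure on P(V / C vh) is tautological, where vh
   represents the point closure(I.o) \ I.o; q : V -> V/C vh is a
   quotient map (any choice of homogeneous coordinates on V/C vh) and
   L : C^{2n} -> W a choice of linear coordinates on H/I = G_a^{2n}. *)
Definition induced_tautological (o : 'cV[C]_N) : Prop :=
  exists vh : 'cV[C]_N,
    [/\ vh != 0, zcl (Iorbit o) vh, ~ Iorbit o vh &
    exists q : 'M[C]_(n.*2.+1, N),
      [/\ q *m vh = 0, \rank q = n.*2.+1 &
      exists L : 'M[C]_(n.*2), L \in unitmx /\
        forall (a : 'rV[C]_(n.*2)) (t : C), exists c : C,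
          c != 0 /\ q *m rho (a *m L, t) = c *: (taut a *m q)]].

End Heisenberg.

(* Each one-parameter subgroup s |-> rho(s g) of the polynomial representation
   is a truncated exponential exp(s Y_g) of a nilpotent matrix Y_g.  On the
   kernel of Y_T the group acts through the abelian quotient H/I, so the
   nilpotent Y_g of the basis vectors of W have a common kernel vector: a
   nonzero covector psi fixed by all of H.  The boundary of the open orbit is
   the hyperplane psi = 0; T fixes it pointwise and is unipotent, so Y_T kills
   it.  Hence Y_T = u psi has rank one, rho(0,s) = 1 + s Y_T and
   rho(g) rho(h) = rho(h) rho(g) + omega(g,h) Y_T.
   Since the orbit is dense, a |-> a o maps A onto V, so
   dim A = 2n+2 + dim K with K = {a in A | a o = 0}.  Writing a = sum c_j rho(g_j),
   a commutes with every rho(h) up to omega(sum c_j w_j, h) Y_T.  On K the vector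
   sum c_j w_j determines a, and two such vectors are omega-orthogonal, so
   dim K <= n.  If the induced structure is tautological, the quotient map q
   intertwines rho with the tautological action, and q a = 0 forces
   sum c_j w_j = 0 for a in K, so K = 0. *)

From Pilot Require Import Defs.
From HB Require Import structures.
From mathcomp Require Import all_boot all_order all_algebra.
From mathcomp Require Import reals complex mpoly boolp.
From mathcomp Require Import ring zify.
Set Implicit Arguments.
Unset Strict Implicit.
Unset Printing Implicit Defensive.
Import Order.TTheory GRing.Theory Num.Theory.
Local Open Scope ring_scope.

(** * Polynomial one-parameter groups of matrices *)

Lemma last_nonzero (T : zmodType) (u : nat -> T) (D : nat) :
  u 0%N != 0 -> u D = 0 -> exists j, u j != 0 /\ u j.+1 = 0.
Proof.
move=> u0; elim: D => [|D IH] uD; first by rewrite uD eqxx in u0.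
by have [/IH|] := eqVneq (u D) 0; last exists D.
Qed.

Section NumFieldPoly.
Variable F : numFieldType.

Lemma poly_horner_inj (p q : {poly F}) : (forall s, p.[s] = q.[s]) -> p = q.
Proof.
move=> pq; apply/eqP; rewrite -subr_eq0; apply/negPn/negP => nz.
pose r := [seq i%:R : F | i <- iota 0 (size (p - q))].
have rootsr : all (root (p - q)) r.
  by apply/allP => _ /mapP[i _ ->]; rewrite rootE hornerD hornerN pq subrr.
have uniqr : uniq r.
  by rewrite map_inj_uniq ?iota_uniq // => i j /eqP; rewrite eqr_nat => /eqP.
by have := max_poly_roots nz rootsr uniqr; rewrite size_map size_iota ltnn.
Qed.

Lemma sum_exprZ_eq0 a b D (M : nat -> 'M[F]_(a, b)) :
  (forall s : F, \sum_(k < D) s ^+ k *: M k = 0) -> forall k, (k < D)%N -> M k = 0.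
Proof.
move=> M0 k kD; apply/matrixP => i j; rewrite mxE.
have : \poly_(l < D) M l i j = 0.
  apply: poly_horner_inj => s; rewrite horner_poly horner0.
  transitivity ((\sum_(l < D) s ^+ l *: M l) i j); last by rewrite M0 mxE.
  by rewrite summxE; apply: eq_bigr => l _; rewrite mxE mulrC.
by move=> /(congr1 (fun p : {poly F} => p`_k)); rewrite coef_poly kD coef0.
Qed.

End NumFieldPoly.

Lemma meval_line_poly (F : comNzRingType) k (p : {mpoly F[k]}) (x : 'I_k -> F) :
  exists q : {poly F}, forall s, meval (fun l => s * x l) p = q.[s].
Proof.
elim/mpolyind: p => [|c mm p _ _ [q Hq]]; first by exists 0 => s; rewrite meval0 horner0.
exists ((c * \prod_l x l ^+ mm l) *: 'X^(mdeg mm) + q) => s.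
rewrite mevalD mevalZ mevalX hornerD hornerZ hornerXn Hq; congr (_ + _).
rewrite mdegE -prodrXr -mulrA -big_split /=; congr (_ * _).
by apply: eq_bigr => l _; rewrite exprMn mulrC.
Qed.

Lemma coef1_comp_XaddC (F : comNzRingType) (p : {poly F}) t :
  (p \Po ('X + t%:P))`_1 = p^`().[t].
Proof.
rewrite -[LHS]mulr1n -coef_deriv -horner_coef0 deriv_comp derivD derivX derivC.
by rewrite addr0 mulr1 horner_comp hornerD hornerX hornerC add0r.
Qed.

Section TruncatedExponential.
Variables (F : numFieldType) (m : nat).
Implicit Types (Y : 'M[F]_m.+1) (D : nat).

Definition expmx D Y : 'M[F]_m.+1 := \sum_(k < D) (k`!%:R)^-1 *: Y ^+ k.

Lemma expmxZ D Y s :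
  expmx D (s *: Y) = \sum_(k < D) s ^+ k *: ((k`!%:R)^-1 *: Y ^+ k).
Proof. by apply: eq_bigr => k _; rewrite exprZn !scalerA mulrC. Qed.

Lemma expmx_comm D Y (M : 'M[F]_m.+1) :
  M *m Y = Y *m M -> M *m expmx D Y = expmx D Y *m M.
Proof.
move=> MY; rewrite mulmx_sumr mulmx_suml; apply: eq_bigr => k _.
by rewrite -scalemxAl -scalemxAr; congr (_ *: _); exact: commrX k MY.
Qed.

Lemma mulmx_expmx_ker a D Y (phi : 'M[F]_(a, m.+1)) :
  (0 < D)%N -> phi *m Y = 0 -> phi *m expmx D Y = phi.
Proof.
case: D => // D _ phiY; rewrite mulmx_sumr big_ord_recl /= expr0 fact0 invr1.
rewrite scale1r mulmx1 big1 ?addr0 // => k _.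
rewrite -scalemxAr /bump /= add1n exprS -[Y * _]/(Y *m _) mulmxA phiY.
by rewrite mul0mx scaler0.
Qed.

Lemma expmx_mulmx_sq0 a D Y (V : 'M[F]_(m.+1, a)) :
  (1 < D)%N -> Y ^+ 2 *m V = 0 -> expmx D Y *m V = V + Y *m V.
Proof.
case: D => [|[|D]] // _ Y2V; rewrite mulmx_suml !big_ord_recl /= expr0 expr1.
rewrite fact0 factS fact0 muln1 invr1 !scale1r mul1mx big1 ?addr0 // => k _.
rewrite -scalemxAl /bump /= !add1n -addn2 exprD -mulmxA Y2V.
by rewrite mulmx0 scaler0.
Qed.

Lemma expmx_coef1 a b D Y (L1 L2 : 'M[F]_(a, m.+1)) (R1 R2 : 'M[F]_(m.+1, b)) :
  (1 < D)%N ->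
  (forall s, L1 *m expmx D (s *: Y) *m R1 = L2 *m expmx D (s *: Y) *m R2) ->
  L1 *m Y *m R1 = L2 *m Y *m R2.
Proof.
move=> D1 LR; apply/eqP; rewrite -subr_eq0; apply/eqP.
pose M k := (k`!%:R)^-1 *: (L1 *m Y ^+ k *m R1 - L2 *m Y ^+ k *m R2).
have := @sum_exprZ_eq0 _ _ _ _ M _ 1%N D1.
rewrite /M expr1 factS fact0 muln1 invr1 scale1r; apply => s.
transitivity (L1 *m expmx D (s *: Y) *m R1 - L2 *m expmx D (s *: Y) *m R2).
  rewrite expmxZ !mulmx_sumr !mulmx_suml -sumrB; apply: eq_bigr => k _.
  by rewrite -!scalemxAr -!scalemxAl -!scalerBr.
by rewrite LR subrr.
Qed.

Lemma expmx_eigenvector_ker D Y (x : 'cV[F]_m.+1) c :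
  (1 < D)%N -> Y ^+ D = 0 -> expmx D Y *m x = c *: x -> Y *m x = 0.
Proof.
move=> D1 YD Ex; apply: contrapT => /eqP Yx.
have [j [Yy Y2y]] : exists j, Y ^+ j *m (Y *m x) != 0 /\ Y ^+ j.+1 *m (Y *m x) = 0.
  apply: (@last_nonzero _ (fun j => Y ^+ j *m (Y *m x)) D) => /=.
    by rewrite expr0 mul1mx.
  by rewrite YD mul0mx.
(* y is an eigenvector of Y, for the eigenvalue c - 1, with Y y != 0 = Y^2 y. *)
have YjY : Y *m Y ^+ j = Y ^+ j *m Y := commrX j (commr_refl Y).
set y := Y ^+ j *m x.
have Yy_eq : Y *m y = Y ^+ j *m (Y *m x) by rewrite /y !mulmxA YjY.
rewrite -Yy_eq in Yy.
have Y2y0 : Y ^+ 2 *m y = 0.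
  by rewrite expr2 -[Y * Y]/(Y *m Y) -mulmxA Yy_eq mulmxA -[Y *m _]/(Y * Y ^+ j) -exprS.
have Ey : expmx D Y *m y = c *: y.
  by rewrite /y mulmxA -(expmx_comm _ (esym YjY)) -mulmxA Ex -scalemxAr.
have Yyc : Y *m y = (c - 1) *: y.
  by rewrite scalerBl scale1r -Ey expmx_mulmx_sq0 // addrC addKr.
move: Y2y0; rewrite expr2 -[Y * Y]/(Y *m Y) -mulmxA Yyc -scalemxAr Yyc scalerA.
move=> /eqP; rewrite scaler_eq0 mulf_eq0 orbb subr_eq0 => /orP[/eqP c1|/eqP y0].
  by move: Yy; rewrite Yyc c1 subrr scale0r eqxx.
by move: Yy; rewrite y0 mulmx0 eqxx.
Qed.

End TruncatedExponential.

Section PolynomialOneParameterGroup.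
Variables (F : numFieldType) (m : nat) (Q : 'I_m.+1 -> 'I_m.+1 -> {poly F}).
Local Notation f s := (\matrix_(i, j) (Q i j).[s]).
Local Notation M k := (\matrix_(i, j) (Q i j)`_k).
Hypotheses (fD : forall s t, f (s + t) = f s *m f t) (f0 : f 0 = 1%:M).

Lemma deriv_one_param i j : (Q i j)^`() = \sum_l (Q i l)`_1 *: Q l j.
Proof.
apply: poly_horner_inj => t.
have shift : Q i j \Po ('X + t%:P) = \sum_l Q i l * ((Q l j).[t])%:P.
  apply: poly_horner_inj => s; rewrite horner_comp hornerD hornerX hornerC.
  have /matrixP/(_ i j) := fD s t; rewrite !mxE => ->.
  by rewrite horner_sum; apply: eq_bigr => l _; rewrite !mxE hornerM hornerC.
rewrite -coef1_comp_XaddC shift coef_sum horner_sum; apply: eq_bigr => l _.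
by rewrite coefMC hornerZ.
Qed.

Lemma coef_one_param_rec k : M k.+1 *+ k.+1 = M 1 *m M k.
Proof.
apply/matrixP => i j; rewrite -scaler_nat !mxE mulr_natl -coef_deriv.
by rewrite deriv_one_param coef_sum; apply: eq_bigr => l _; rewrite coefZ !mxE.
Qed.

Lemma coef_one_param k : M k = (k`!%:R)^-1 *: M 1 ^+ k.
Proof.
elim: k => [|k IH].
  rewrite fact0 invr1 scale1r expr0 (_ : 1 = f 0); last by rewrite f0.
  by apply/matrixP => i j; rewrite !mxE horner_coef0.
have k1_nz : (k.+1%:R : F) != 0 by rewrite pnatr_eq0.
have -> : M k.+1 = (k.+1%:R)^-1 *: (M k.+1 *+ k.+1).
  by rewrite -scaler_nat scalerA mulVf // scale1r.
by rewrite coef_one_param_rec IH -scalemxAr scalerA -invfM -natrM -factS exprS.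
Qed.

Lemma poly_one_param_expmx : exists (Y : 'M[F]_m.+1) (D : nat),
  [/\ (1 < D)%N, Y ^+ D = 0 & forall s, f s = expmx D (s *: Y)].
Proof.
pose D := (\max_(ij : 'I_m.+1 * 'I_m.+1) size (Q ij.1 ij.2)).+2.
have szD i j : (size (Q i j) <= D)%N.
  by rewrite 2?leqW // (leq_bigmax (i, j)).
have MD : M D = 0.
  by apply/matrixP => i j; rewrite !mxE nth_default.
exists (M 1), D; split => //.
  have fD_nz : (D`!%:R : F) != 0 by rewrite pnatr_eq0 -lt0n fact_gt0.
  move: MD; rewrite coef_one_param => /eqP.
  by rewrite scaler_eq0 invr_eq0 (negbTE fD_nz) => /eqP.
move=> s; rewrite expmxZ; apply/matrixP => i j.
rewrite mxE (horner_coef_wide s (szD i j)) summxE.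
by apply: eq_bigr => k _; rewrite -coef_one_param !mxE mulrC.
Qed.

End PolynomialOneParameterGroup.

(** * Linear algebra *)

Lemma vspace_of_linear_pred (K : fieldType) (vT : vectType K) (P : vT -> Prop) :
  P 0 -> (forall x y, P x -> P y -> P (x + y)) -> (forall c x, P x -> P (c *: x)) ->
  exists U : {vspace vT}, forall x, x \in U <-> P x.
Proof.
move=> P0 PD PZ.
pose within (U : {vspace vT}) := forall x, x \in U -> P x.
have within_add U x : within U -> P x -> within (U + <[x]>)%VS.
  move=> UP Px y /memv_addP[u uU [v /vlineP[c ->] ->]].
  by apply: PD; [exact: UP | exact: PZ].
pose big (k : nat) := `[< exists U, within U /\ \dim U = k >].
have big0 : big 0%N.
  by apply/asboolP; exists 0%VS; split; [move=> x; rewrite memv0 => /eqP -> | exact: dimv0].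
have big_le k : big k -> (k <= \dim (fullv : {vspace vT}))%N.
  by move=> /asboolP[U [_ <-]]; exact/dimvS/subvf.
have [k /asboolP[U [UP dimU]] kmax] := ex_maxnP (ex_intro big 0%N big0) big_le.
exists U => x; split; first exact: UP.
move=> Px; apply: contrapT => /negP xU.
have : (\dim U < \dim (U + <[x]>))%N.
  rewrite (ltn_leqif (dimv_leqif_sup (addvSl U <[x]>))).
  by apply: contra xU => /subvP; apply; apply: (subvP (addvSr U _)); exact: memv_line.
rewrite dimU ltnNge; apply/negP/negPn/kmax/asboolP.
by exists (U + <[x]>)%VS; split => //; exact: within_add.
Qed.

Section LinearAlgebra.
Variable F : fieldType.

Lemma nilpotent_common_kernel m (P : 'rV[F]_m.+1 -> Prop) (Ys : seq 'M[F]_m.+1)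
    (phi0 : 'rV[F]_m.+1) :
  (forall phi Y, P phi -> Y \in Ys -> P (phi *m Y)) ->
  (forall phi Y Y', P phi -> Y \in Ys -> Y' \in Ys -> phi *m Y *m Y' = phi *m Y' *m Y) ->
  (forall Y, Y \in Ys -> exists D, Y ^+ D = 0) ->
  phi0 != 0 -> P phi0 ->
  exists phi, [/\ phi != 0, P phi & forall Y, Y \in Ys -> phi *m Y = 0].
Proof.
elim: Ys => [|Y Ys IH] stable comm nil phi0_nz Pphi0; first by exists phi0.
have YYs : Y \in Y :: Ys by rewrite inE eqxx.
have Ys_sub Y' : Y' \in Ys -> Y' \in Y :: Ys by rewrite inE => ->; rewrite orbT.
have [phi [phi_nz Pphi kerYs]] : exists phi,
    [/\ phi != 0, P phi & forall Y', Y' \in Ys -> phi *m Y' = 0].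
  apply: IH => // [phi Y' Pphi /Ys_sub|phi Y' Y'' Pphi /Ys_sub + /Ys_sub|Y' /Ys_sub].
  - exact: stable.
  - exact: comm.
  - exact: nil.
have YS j : Y ^+ j.+1 = Y *m Y ^+ j := exprS Y j.
have PYj j psi : P psi -> P (psi *m Y ^+ j).
  elim: j psi => [|j IHj] psi Ppsi; first by rewrite expr0 mulmx1.
  by rewrite YS mulmxA; apply/IHj/stable.
have commYj j psi Y' : P psi -> Y' \in Ys -> psi *m Y ^+ j *m Y' = psi *m Y' *m Y ^+ j.
  elim: j psi => [|j IHj] psi Ppsi Y'Ys; first by rewrite expr0 !mulmx1.
  rewrite YS !mulmxA IHj //; last exact: stable.
  by rewrite (comm psi Y Y' Ppsi YYs (Ys_sub _ Y'Ys)).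
have [D YD] := nil Y YYs.
have [j [nz kerY]] : exists j, phi *m Y ^+ j != 0 /\ phi *m Y ^+ j.+1 = 0.
  apply: (@last_nonzero _ (fun j => phi *m Y ^+ j) D) => /=.
    by rewrite expr0 mulmx1.
  by rewrite YD mulmx0.
exists (phi *m Y ^+ j); split => //; first exact: PYj.
move=> Y'; rewrite inE => /orP[/eqP ->|Y'Ys].
  by rewrite -mulmxA -[_ *m Y]/(Y ^+ j * Y) -exprSr.
by rewrite commYj // kerYs // mul0mx.
Qed.

Lemma separating_row m (W : {vspace 'cV[F]_m}) (x : 'cV[F]_m) : x \notin W ->
  exists phi : 'rV[F]_m, phi *m x != 0 /\ forall y, y \in W -> phi *m y = 0.
Proof.
move=> xW; pose p := (\1 - projv W)%VF.
have pE y : p y = y - projv W y by rewrite add_lfunE opp_lfunE id_lfunE.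
have /matrix0Pn[i [k pxi]] : p x != 0.
  by rewrite pE subr_eq0; apply: contra xW => /eqP ->; exact: memv_proj.
rewrite ord1 in pxi.
pose phi := \row_j p (delta_mx j 0) i 0.
have phiE y : phi *m y = (p y i 0)%:M.
  apply/matrixP => a b; rewrite !ord1 [RHS]mxE eqxx mulr1n mxE.
  rewrite {2}[y]matrix_sum_delta linear_sum summxE; apply: eq_bigr => j _.
  by rewrite big_ord1 linearZ !mxE mulrC.
exists phi; split=> [|y yW]; last by rewrite phiE pE projv_id // subrr mxE raddf0.
by apply/eqP => /matrixP/(_ 0 0); rewrite phiE !mxE mulr1n; exact/eqP.
Qed.

Lemma mx_factor_through_row a m (M : 'M[F]_(a, m)) (psi : 'rV[F]_m) (o : 'cV[F]_m) :
  (psi *m o) 0 0 != 0 -> (forall x : 'cV_m, psi *m x = 0 -> M *m x = 0) ->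
  M = ((psi *m o) 0 0)^-1 *: (M *m o) *m psi.
Proof.
move=> pso ker; set c := (psi *m o) 0 0.
suff Mx (x : 'cV_m) : M *m x = c^-1 *: (M *m o) *m psi *m x.
  apply/matrixP => i j.
  by have := congr1 (fun v : 'cV_a => v i 0) (Mx (delta_mx j 0)); rewrite -!colE !mxE.
set d := (psi *m x) 0 0.
have : psi *m (x - (d / c) *: o) = 0.
  rewrite mulmxBr -scalemxAr [psi *m x]mx11_scalar [psi *m o]mx11_scalar -/c -/d.
  by rewrite scale_scalar_mx mulfVK // subrr.
move/ker; rewrite mulmxBr -scalemxAr => /eqP; rewrite subr_eq0 => /eqP ->.
by rewrite -mulmxA [psi *m x]mx11_scalar -/d mul_mx_scalar scalerA mulrC.
Qed.

Lemma isotropic_rank k m (B : 'M[F]_(k, m)) (Om : 'M[F]_m) :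
  Om \in unitmx -> B *m Om *m B^T = 0 -> ((\rank B).*2 <= m)%N.
Proof.
move=> Om_unit /mulmx0_rank_max.
by rewrite mxrankMfree ?row_free_unit // mxrank_tr addnn.
Qed.

Lemma row_sub_corank1 m (q : 'M[F]_(m, m.+1)) (psi : 'rV[F]_m.+1)
    (x : 'cV[F]_m.+1) :
  \rank q = m -> x != 0 -> q *m x = 0 -> psi *m x = 0 -> exists pt, psi = pt *m q.
Proof.
move=> rq x_nz qx psix; apply/submxP.
have /mulmx0_rank_max rk_le : col_mx q psi *m x = 0 by rewrite mul_col_mx qx psix col_mx0.
have x_rk : (0 < \rank x)%N by rewrite lt0n mxrank_eq0.
have /andP[q_sub _] : (q <= col_mx q psi)%MS && (psi <= col_mx q psi)%MS.
  by rewrite -col_mx_sub submx_refl.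
have : (col_mx q psi <= q)%MS.
  by rewrite -(geq_leqif (mxrank_leqif_sup q_sub)) rq; lia.
by rewrite col_mx_sub => /andP[].
Qed.

Lemma unipotent_row_scalar m (E : 'M[F]_m) (pt : 'rV[F]_m) c :
  pt != 0 -> E *m E = 0 -> c *: (pt *m (1%:M + E)) = pt -> c = 1.
Proof.
move=> pt_nz E2 cpt; have [//|c1] := eqVneq c 1; rewrite -subr_eq0 in c1.
have fix0 (v : 'rV[F]_m) : c *: v = v -> v = 0.
  by move/eqP; rewrite -subr_eq0 -[X in _ - X]scale1r -scalerBl scaler_eq0 (negbTE c1) => /eqP.
rewrite mulmxDr mulmx1 scalerDr in cpt.
have ptE : pt *m E = 0.
  apply: fix0; have := congr1 (mulmxr E) cpt.
  by rewrite /= mulmxDl -!scalemxAl -mulmxA E2 mulmx0 scaler0 addr0.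
by move: cpt; rewrite ptE scaler0 addr0 => /fix0 pt0; rewrite pt0 eqxx in pt_nz.
Qed.

End LinearAlgebra.

(** * The Heisenberg group *)

Section HeisenbergGroup.
Variables (R : realType) (n : nat) (Om : 'M[R[i]]_(n.*2)).
Hypothesis Om_skew : Om^T = - Om.
Local Notation C := R[i].
Local Notation heis := (heis R n).
Implicit Types (g h : heis) (v w : 'rV[C]_(n.*2)) (s t : C).

Definition om v w : C := (v *m Om *m w^T) 0 0.

Lemma om_skew v w : om w v = - om v w.
Proof.
rewrite /om -[w *m Om *m v^T]trmxK mxE !trmx_mul !trmxK Om_skew.
by rewrite mulNmx mulmxN mxE mulmxA.
Qed.

Lemma om_self v : om v v = 0.
Proof.
have : om v v *+ 2 == 0 by rewrite mulr2n {1}om_skew addNr.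
by rewrite mulrn_eq0 => /eqP.
Qed.

Lemma om0l w : om 0 w = 0. Proof. by rewrite /om !mul0mx mxE. Qed.
Lemma om0r v : om v 0 = 0. Proof. by rewrite /om trmx0 mulmx0 mxE. Qed.
Lemma omDl v v' w : om (v + v') w = om v w + om v' w.
Proof. by rewrite /om !mulmxDl mxE. Qed.
Lemma omDr v w w' : om v (w + w') = om v w + om v w'.
Proof. by rewrite /om linearD /= mulmxDr mxE. Qed.
Lemma omZl s v w : om (s *: v) w = s * om v w.
Proof. by rewrite /om -!scalemxAl mxE. Qed.
Lemma omZr s v w : om v (s *: w) = s * om v w.
Proof. by rewrite /om linearZ /= -scalemxAr mxE. Qed.

Definition hsc s g : heis := (s *: g.1, s * g.2).
Definition ei (i : 'I_(n.*2)) : heis := (delta_mx 0 i, 0).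

Lemma hsc_mul s t g : heis_mul Om (hsc s g) (hsc t g) = hsc (s + t) g.
Proof.
rewrite /heis_mul /hsc /= -/(om _ _) omZl omZr om_self !mulr0 addr0.
by rewrite scalerDl mulrDl.
Qed.

Lemma hsc0 g : hsc 0 g = heis_one R n.
Proof. by rewrite /hsc scale0r mul0r. Qed.

Lemma hscT s : hsc s (heisT R n) = (0, s).
Proof. by rewrite /hsc scaler0 mulr1. Qed.

Lemma heis_coord_hsc s g l : heis_coord (hsc s g) l = s * heis_coord g l.
Proof. by rewrite /heis_coord; case: insub => [j|] //=; rewrite mxE. Qed.

Lemma heis_mulC g h : heis_mul Om g h = heis_mul Om (0, om g.1 h.1) (heis_mul Om h g).
Proof.
rewrite /heis_mul /=; congr pair; first by rewrite add0r addrC.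
rewrite -/(om g.1 h.1) -/(om h.1 g.1) !mul0mx mxE (om_skew g.1 h.1).
by set x := om g.1 h.1; field.
Qed.

Lemma heis_central g s : heis_mul Om g (0, s) = heis_mul Om (0, s) g.
Proof.
rewrite /heis_mul /= trmx0 mulmx0 !mul0mx !mxE !mulr0 addr0 add0r.
by rewrite !addr0 (addrC g.2).
Qed.

Lemma heis_ind (P : heis -> Prop) :
  (forall t, P (0, t)) ->
  (forall g s i, P g -> P (heis_mul Om g (hsc s (ei i)))) ->
  forall g, P g.
Proof.
move=> Pcenter Pstep [w t].
pose wk k := \row_j (if (j < k)%N then w 0 j else 0) : 'rV[C]_(n.*2).
suff Pk k : (k <= n.*2)%N -> forall t, P (wk k, t).
  by have := Pk _ (leqnn _) t; congr P; congr pair; apply/rowP => j; rewrite mxE ltn_ord.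
elim: k => [_ t'|k IH k_lt t']; first by have -> : wk 0%N = 0 by apply/rowP => j; rewrite !mxE.
pose i0 : 'I_(n.*2) := Ordinal k_lt.
have -> : (wk k.+1, t') =
    heis_mul Om (wk k, t' - 2^-1 * om (wk k) (w 0 i0 *: delta_mx 0 i0)) (hsc (w 0 i0) (ei i0)).
  rewrite /heis_mul /hsc /= -/(om _ _) mulr0 addr0 subrK; congr pair.
  apply/rowP => j; rewrite !mxE eqxx /= -val_eqE /= ltnS leq_eqVlt.
  case: ltngtP => jk /=; rewrite ?mulr0 ?addr0 ?mulr1 ?add0r //.
  by congr (w 0 _); apply: val_inj.
by apply: Pstep; apply: IH; exact: ltnW.
Qed.

End HeisenbergGroup.

(** * Heisenberg structures *)

Section LinearForms.
Variables (R : realType) (n : nat).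
Local Notation C := R[i].
Local Notation N := (n.*2.+2).

Definition linear_mpoly (c : 'I_N -> C) : {mpoly C[N]} := \sum_j c j *: 'X_j.

Lemma linear_mpoly_homog c : homogeneous (linear_mpoly c).
Proof.
exists 1%N; apply: rpred_sum => j _; apply: rpredZ.
by rewrite dhomogX; apply/eqP; exact: mdeg1.
Qed.

Lemma veval_linear_mpoly a (M : 'M[C]_(a, N)) i x :
  veval (linear_mpoly (fun l => M i l)) x = (M *m x) i 0.
Proof.
rewrite /veval /linear_mpoly mxE.
elim/big_rec2: _ => [|j y p _ IH]; first by rewrite meval0.
by rewrite mevalD mevalZ mevalXU IH.
Qed.

Lemma zcl_mulmx_eq0 (S : 'cV[C]_N -> Prop) a (M : 'M[C]_(a, N)) x :
  zcl S x -> (forall y, S y -> M *m y = 0) -> M *m x = 0.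
Proof.
move=> [_ Sx] MS; apply/matrixP => i j; rewrite ord1 -veval_linear_mpoly mxE.
apply: Sx (linear_mpoly_homog _) _ => y Sy _.
by rewrite veval_linear_mpoly MS // mxE.
Qed.

End LinearForms.

Section TautologicalAction.
Variables (R : realType) (n : nat).

Definition taut_nil (a : 'rV[R[i]]_(n.*2)) : 'M[R[i]]_(n.*2.+1) :=
  \matrix_(i, j) (if j == ord0 then
                   (if unlift ord0 i is Some k then a 0 k else 0) else 0).

Lemma tautE a : @taut R n a = 1%:M + taut_nil a. Proof. by []. Qed.

Lemma taut_nil_sq a : taut_nil a *m taut_nil a = 0.
Proof.
apply/matrixP => i j; rewrite !mxE (bigD1 ord0) //= big1 ?addr0.
  by rewrite [taut_nil a ord0 j]mxE unlift_none if_same mulr0.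
by move=> l /negbTE l0; rewrite [taut_nil a i l]mxE l0 mul0r.
Qed.

Lemma taut_col0 a k : @taut R n a (lift ord0 k) ord0 = a 0 k.
Proof. by rewrite tautE !mxE eqxx liftK eq_sym (negbTE (neq_lift _ _)) add0r. Qed.

End TautologicalAction.

Section Representation.
Variables (R : realType) (n : nat) (Om : 'M[R[i]]_(n.*2)).
Variable rho : heis R n -> 'M[R[i]]_(n.*2.+2).
Hypotheses (hOm : skew_nondeg Om) (hH : Hstructure Om rho).
Local Notation C := R[i].
Local Notation N := (n.*2.+2).
Local Notation heis := (heis R n).

Let Om_skew : Om^T = - Om := hOm.1.

Let Om_unit : Om \in unitmx := hOm.2.

Lemma rho_one : rho (heis_one R n) = 1%:M.
Proof. by case: hH. Qed.

Lemma rho_mul g h : rho (heis_mul Om g h) = rho g *m rho h.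
Proof. by case: hH. Qed.

Lemma rho_eff g : (exists c, rho g = c%:M) -> g = heis_one R n.
Proof. by case: hH => _ _ _ + _; apply. Qed.

Lemma rho_line_expmx g : exists (Y : 'M[C]_N) (D : nat),
  [/\ (1 < D)%N, Y ^+ D = 0 & forall s, rho (hsc s g) = expmx D (s *: Y)].
Proof.
case: hH => _ _ [P rhoP] _ _.
have /fin_all_exists[Q lineQ] ij : exists q : {poly C},
    forall s, meval (fun l => s * heis_coord g l) (P ij.1 ij.2) = q.[s].
  exact: meval_line_poly.
have rhoQ s : rho (hsc s g) = \matrix_(i, j) (Q (i, j)).[s].
  apply/matrixP => i j; rewrite mxE rhoP -(lineQ (i, j)).
  by apply: meval_eq => l; rewrite heis_coord_hsc.
have [||Y [D [D_gt1 YD expY]]] := @poly_one_param_expmx _ _ (fun i j => Q (i, j)).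
- by move=> s t; rewrite -!rhoQ -(hsc_mul Om_skew) rho_mul.
- by rewrite -rhoQ hsc0 rho_one.
by exists Y, D; split => // s; rewrite rhoQ expY.
Qed.

Lemma exists_rho_generators : exists (Y : heis -> 'M[C]_N) (D : heis -> nat),
  [/\ forall g, (1 < D g)%N, forall g, Y g ^+ D g = 0 &
       forall g s, rho (hsc s g) = expmx (D g) (s *: Y g)].
Proof.
have /choice[YD YDP] g : exists YD : 'M[C]_N * nat,
    [/\ (1 < YD.2)%N, YD.1 ^+ YD.2 = 0 & forall s, rho (hsc s g) = expmx YD.2 (s *: YD.1)].
  by have [Y [D ?]] := rho_line_expmx g; exists (Y, D).
by exists (fun g => (YD g).1), (fun g => (YD g).2); split=> g; case: (YDP g).
Qed.

Variables (Y : heis -> 'M[C]_N) (D : heis -> nat).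
Hypotheses (D_gt1 : forall g, (1 < D g)%N) (Y_nil : forall g, Y g ^+ D g = 0)
  (rho_expmx : forall g s, rho (hsc s g) = expmx (D g) (s *: Y g)).

Definition YT := Y (heisT R n).

Lemma rho_center_expmx s : rho (0, s) = expmx (D (heisT R n)) (s *: YT).
Proof. by rewrite -rho_expmx hscT. Qed.

Lemma rho_coef1 g a b (L1 L2 : 'M[C]_(a, N)) (R1 R2 : 'M[C]_(N, b)) :
  (forall s, L1 *m rho (hsc s g) *m R1 = L2 *m rho (hsc s g) *m R2) ->
  L1 *m Y g *m R1 = L2 *m Y g *m R2.
Proof. by move=> LR; apply: (expmx_coef1 (D_gt1 g)) => s; rewrite -rho_expmx. Qed.

Lemma rho_fix_of_ker g a (phi : 'M[C]_(a, N)) :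
  phi *m Y g = 0 -> forall s, phi *m rho (hsc s g) = phi.
Proof.
move=> phiY s; rewrite rho_expmx mulmx_expmx_ker 1?ltnW //.
by rewrite -scalemxAr phiY scaler0.
Qed.

Lemma YT_comm_rho g : rho g *m YT = YT *m rho g.
Proof.
have := @rho_coef1 (heisT R n) _ _ (rho g) 1%:M 1%:M (rho g).
rewrite mulmx1 mul1mx; apply=> s; rewrite mulmx1 mul1mx hscT.
by rewrite -!rho_mul heis_central.
Qed.

Lemma YT_comm_Y g : Y g *m YT = YT *m Y g.
Proof.
have := @rho_coef1 g _ _ 1%:M YT YT 1%:M.
by rewrite mulmx1 mul1mx; apply=> s; rewrite mulmx1 mul1mx YT_comm_rho.
Qed.

Section KernelOfYT.
Variable phi : 'rV[C]_N.
Hypothesis phiYT : phi *m YT = 0.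

Lemma kerYT_rho_comm g h : phi *m rho g *m rho h = phi *m rho h *m rho g.
Proof.
rewrite -!mulmxA -!rho_mul (heis_mulC Om_skew) rho_mul mulmxA.
by rewrite -(@hscT R n (om Om g.1 h.1)) rho_fix_of_ker.
Qed.

Lemma kerYT_Y_comm g h : phi *m Y g *m Y h = phi *m Y h *m Y g.
Proof.
have step s : phi *m rho (hsc s g) *m Y h = phi *m Y h *m rho (hsc s g).
  have := @rho_coef1 h _ _ (phi *m rho (hsc s g)) phi 1%:M (rho (hsc s g)).
  by rewrite !mulmx1; apply=> t; rewrite mulmx1 kerYT_rho_comm.
have := @rho_coef1 g _ _ phi (phi *m Y h) (Y h) 1%:M.
by rewrite mulmx1; apply=> s; rewrite mulmx1 step.
Qed.

Lemma kerYT_mulY g : phi *m Y g *m YT = 0.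
Proof. by rewrite -mulmxA YT_comm_Y mulmxA phiYT mul0mx. Qed.

End KernelOfYT.

Lemma exists_fixed_row : exists psi : 'rV[C]_N,
  [/\ psi != 0, psi *m YT = 0 & forall g, psi *m rho g = psi].
Proof.
have e0_nz : (delta_mx 0 0 : 'rV[C]_N) != 0.
  by apply/eqP => /matrixP/(_ 0 0); rewrite !mxE eqxx => /eqP; rewrite oner_eq0.
have [|||phi [phi_nz _ phiYT]] :=
  @nilpotent_common_kernel _ _ (fun _ => True) [:: YT] _ _ _ _ e0_nz I.
- by [].
- by move=> ? Y1 Y2 _; rewrite !inE => /eqP -> /eqP ->.
- by move=> Y1; rewrite inE => /eqP ->; exists (D (heisT R n)); exact: Y_nil.
pose Ys := [seq Y (@ei R n i) | i <- enum 'I_(n.*2)].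
have [|||psi [psi_nz psiYT psiY]] := @nilpotent_common_kernel _ _
  (fun phi => phi *m YT = 0) Ys phi _ _ _ phi_nz (phiYT _ (mem_head _ _)).
- by move=> phi' _ phi'YT /mapP[i _ ->]; exact: kerYT_mulY.
- by move=> phi' _ _ phi'YT /mapP[i _ ->] /mapP[j _ ->]; exact: kerYT_Y_comm.
- by move=> _ /mapP[i _ ->]; exists (D (@ei R n i)); exact: Y_nil.
exists psi; split => //; apply: (heis_ind (Om := Om)) => [t|g s i psi_g].
  by rewrite -(@hscT R n t) rho_fix_of_ker.
rewrite rho_mul mulmxA psi_g rho_fix_of_ker //; apply: psiY.
by apply/mapP; exists i; rewrite ?mem_enum.
Qed.

Variable o : 'cV[C]_N.
Hypotheses (ho : open_dense_orbit rho o) (hT : T_fixes_boundary rho o).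
Variable psi : 'rV[C]_N.
Hypotheses (psi_nz : psi != 0) (psiYT : psi *m YT = 0)
  (psi_rho : forall g, psi *m rho g = psi).

Lemma orbit_dense a (M : 'M[C]_(a, N)) : (forall g, M *m (rho g *m o) = 0) -> M = 0.
Proof.
move=> Morb; apply/matrixP => i j.
have ej_nz : (delta_mx j 0 : 'cV[C]_N) != 0.
  by apply/eqP => /matrixP/(_ j 0); rewrite !mxE !eqxx => /eqP; rewrite oner_eq0.
have /matrixP/(_ i 0) : M *m (delta_mx j 0 : 'cV_N) = 0.
  apply: (zcl_mulmx_eq0 (ho.2.2 _ ej_nz)) => y [g [c [_ ->]]].
  by rewrite -scalemxAr Morb scaler0.
by rewrite -colE !mxE.
Qed.

Lemma psi_o_neq0 : (psi *m o) 0 0 != 0.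
Proof.
apply/eqP => pso; move/eqP: psi_nz; apply; apply: orbit_dense => g.
by rewrite mulmxA psi_rho [psi *m o]mx11_scalar pso raddf0.
Qed.

Lemma psi_orbit_neq0 x : Defs.orbit rho o x -> psi *m x != 0.
Proof.
case=> g [c [c_nz ->]]; rewrite -scalemxAr mulmxA psi_rho scaler_eq0 negb_or c_nz /=.
by apply: contraNneq psi_o_neq0 => ->; rewrite mxE.
Qed.

Lemma kerpsi_kerYT (x : 'cV[C]_N) : psi *m x = 0 -> YT *m x = 0.
Proof.
(* x is off the open orbit, hence an eigenvector of the unipotent rho(T). *)
move=> psix; have [->|x_nz] := eqVneq x 0; first by rewrite mulmx0.
have [c [_ Tx]] : proj_eq x (rho (heisT R n) *m x).
  by apply: (hT x_nz) => /psi_orbit_neq0; rewrite psix eqxx.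
apply: (expmx_eigenvector_ker (D_gt1 (heisT R n)) (Y_nil _) (c := c)).
by rewrite -[Y _]scale1r -rho_expmx hscT.
Qed.

Lemma YT_factor : YT = ((psi *m o) 0 0)^-1 *: (YT *m o) *m psi.
Proof. exact: mx_factor_through_row psi_o_neq0 kerpsi_kerYT. Qed.

Lemma YT_rho g : YT *m rho g = YT.
Proof. by rewrite YT_factor -mulmxA psi_rho. Qed.

Lemma YT_sq : YT *m YT = 0.
Proof. by rewrite {1}YT_factor -mulmxA psiYT mulmx0. Qed.

Lemma rho_center s : rho (0, s) = 1%:M + s *: YT.
Proof.
rewrite rho_center_expmx.
have := @expmx_mulmx_sq0 _ _ _ _ (s *: YT) 1%:M (D_gt1 (heisT R n)).
rewrite !mulmx1; apply.
have YT2 : YT ^+ 2 = 0 := YT_sq.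
by rewrite exprZn YT2 scaler0.
Qed.

Lemma YT_neq0 : YT != 0.
Proof.
apply/eqP => YT0.
have : heisT R n = heis_one R n.
  by apply: rho_eff; exists 1; rewrite /heisT rho_center YT0 scaler0 addr0.
by move/(congr1 snd)/eqP; rewrite oner_eq0.
Qed.

Lemma YTo_neq0 : YT *m o != 0.
Proof. by apply: contraNneq YT_neq0 => YTo0; rewrite YT_factor YTo0 scaler0 mul0mx. Qed.

Lemma rho_commutator g h : rho g *m rho h = rho h *m rho g + om Om g.1 h.1 *: YT.
Proof.
rewrite -rho_mul (heis_mulC Om_skew) !rho_mul rho_center mulmxDl mul1mx.
by rewrite -scalemxAl mulmxA !YT_rho.
Qed.

Definition comb (s : seq (C * heis)) : 'M[C]_N := \sum_(p <- s) p.1 *: rho p.2.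
Definition vcomb (s : seq (C * heis)) : 'rV[C]_(n.*2) := \sum_(p <- s) p.1 *: p.2.1.

Definition twisted (a : 'M[C]_N) (v : 'rV[C]_(n.*2)) :=
  forall h, a *m rho h = rho h *m a + om Om v h.1 *: YT.

Lemma twisted_sum I (r : seq I) (P : pred I) (F : I -> 'M[C]_N) (G : I -> 'rV[C]_(n.*2)) :
  (forall i, P i -> twisted (F i) (G i)) ->
  twisted (\sum_(i <- r | P i) F i) (\sum_(i <- r | P i) G i).
Proof.
move=> FG; apply: big_ind2 => // [h|a1 v1 a2 v2 t1 t2 h].
  by rewrite mul0mx mulmx0 om0l scale0r addr0.
by rewrite mulmxDl mulmxDr t1 t2 omDl scalerDl addrACA.
Qed.

Lemma twistedZ c a v : twisted a v -> twisted (c *: a) (c *: v).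
Proof. by move=> av h; rewrite -scalemxAl -scalemxAr av omZl -scalerA scalerDr. Qed.

Lemma comb_twisted s : twisted (comb s) (vcomb s).
Proof. by apply: twisted_sum => -[c g] _; apply: twistedZ; exact: rho_commutator. Qed.

Lemma twisted_comb_comm a v t :
  twisted a v -> a *m comb t = comb t *m a + om Om v (vcomb t) *: YT.
Proof.
move=> av; apply: (big_ind2 (fun b w => a *m b = b *m a + om Om v w *: YT)).
- by rewrite mulmx0 mul0mx om0r scale0r addr0.
- move=> b1 w1 b2 w2 e1 e2.
  by rewrite mulmxDr mulmxDl e1 e2 omDr scalerDl addrACA.
- by move=> [c g] _ /=; rewrite -scalemxAr -scalemxAl av omZr scalerDr scalerA.
Qed.

Lemma twisted_ker_eq0 a : twisted a 0 -> a *m o = 0 -> a = 0.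
Proof.
move=> a0 ao; apply: orbit_dense => h.
by rewrite mulmxA a0 om0l scale0r addr0 -mulmxA ao mulmx0.
Qed.

Lemma ker_isotropic s t :
  comb s *m o = 0 -> comb t *m o = 0 -> om Om (vcomb s) (vcomb t) = 0.
Proof.
move=> so to; have := twisted_comb_comm t (comb_twisted s).
move=> /(congr1 (mulmxr o)) /=; rewrite mulmxDl -!mulmxA so to !mulmx0 add0r.
by move/esym/eqP; rewrite -scalemxAl scaler_eq0 (negbTE YTo_neq0) orbF => /eqP.
Qed.

Variable A : {vspace 'M[C]_N}.
Hypothesis hA : is_assoc_alg rho A.

Definition at_o : 'Hom('M[C]_N, 'cV[C]_N) := linfun (mulmxr o).

Lemma at_oE a : at_o a = a *m o. Proof. by rewrite lfunE. Qed.

Lemma rho_in_A g : rho g \in A.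
Proof. by case: hA => -[_ _ /(_ g 1 (oner_neq0 _))]; rewrite scale1r. Qed.

Lemma at_o_onto : (at_o @: A)%VS = fullv.
Proof.
apply/eqP; rewrite eqEsubv subvf /=; apply/subvP => x _; apply: contrapT => /negP xW.
have [phi [phix phiW]] := separating_row xW.
suff phi0 : phi = 0 by rewrite phi0 mul0mx eqxx in phix.
by apply: orbit_dense => g; apply: phiW; rewrite -at_oE memv_img ?rho_in_A.
Qed.

Lemma dimA_split : \dim A = (\dim (A :&: lker at_o) + N)%N.
Proof. by rewrite -(limg_ker_dim at_o A) at_o_onto dimvf /= /dim /= muln1. Qed.

Lemma A_comb a : a \in A -> exists s, a = comb s.
Proof.
have [|||U UP] := @vspace_of_linear_pred _ _ (fun a => exists s, a = comb s).
- by exists [::]; rewrite /comb big_nil.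
- by move=> _ _ [s ->] [t ->]; exists (s ++ t); rewrite /comb big_cat.
- move=> c _ [s ->]; exists [seq (c * p.1, p.2) | p <- s].
  by rewrite /comb big_map scaler_sumr; apply: eq_bigr => p _; rewrite scalerA.
suff /subvP AU : (A <= U)%VS by move=> /AU /UP.
apply: hA.2; split.
- by apply/UP; exists [:: (1, heis_one R n)]; rewrite /comb big_seq1 scale1r rho_one.
- move=> _ _ /UP[s ->] /UP[t ->]; apply/UP.
  exists [seq (p.1 * q.1, heis_mul Om p.2 q.2) | p <- s, q <- t].
  rewrite /comb big_allpairs_dep /= mulmx_suml; apply: eq_bigr => p _.
  rewrite mulmx_sumr; apply: eq_bigr => q _.
  by rewrite -scalemxAl -scalemxAr scalerA rho_mul.
- by move=> g c _; apply/UP; exists [:: (c, g)]; rewrite /comb big_seq1.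
Qed.

Lemma dim_ker_at_o : (\dim (A :&: lker at_o) <= n)%N.
Proof.
set U := (A :&: lker at_o)%VS; set k := \dim U; set b := vbasis U.
have bU (i : 'I_k) : b`_i \in U by apply/vbasis_mem/mem_nth; rewrite size_tuple.
have /choice[S bS] (i : 'I_k) : exists s, b`_i = comb s.
  by apply: A_comb; have := bU i; rewrite memv_cap => /andP[].
have So i : comb (S i) *m o = 0.
  by have := bU i; rewrite bS memv_cap memv_ker at_oE => /andP[_ /eqP].
pose B : 'M[C]_(k, n.*2) := \matrix_(i, j) vcomb (S i) 0 j.
have BOB : B *m Om *m B^T = 0.
  apply/matrixP => i j; rewrite [RHS]mxE -(ker_isotropic (So i) (So j)) /om !mxE.
  by apply: eq_bigr => l _; rewrite !mxE; congr (_ * _); apply: eq_bigr => m _; rewrite !mxE.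
have B_inj (lam : 'rV[C]_k) : lam *m B = 0 -> lam = 0.
  move=> lamB; pose a := \sum_i lam 0 i *: b`_i.
  have : twisted a (\sum_i lam 0 i *: vcomb (S i)).
    by apply: twisted_sum => i _; apply: twistedZ; rewrite bS; exact: comb_twisted.
  have -> : \sum_i lam 0 i *: vcomb (S i) = 0.
    apply/rowP => j; rewrite -[RHS](congr1 (fun v : 'rV[C]_(n.*2) => v 0 j) lamB) summxE !mxE.
    by apply: eq_bigr => i _; rewrite !mxE.
  move=> /twisted_ker_eq0 a0; have {}a0 : a = 0.
    by apply: a0; rewrite /a mulmx_suml big1 // => i _; rewrite -scalemxAl bS So scaler0.
  have /freeP b_free := basis_free (vbasisP U).
  by apply/rowP => i; rewrite mxE; exact: b_free _ a0 i.
have B_free : row_free B.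
  rewrite -kermx_eq0; apply/eqP/row_matrixP => r; rewrite row0; apply: B_inj.
  by rewrite -row_mul mulmx_ker row0.
by have := isotropic_rank Om_unit BOB; rewrite (eqP B_free) leq_double.
Qed.

Lemma dimA_bounds : (N <= \dim A <= 3 * n + 2)%N.
Proof. by rewrite dimA_split; have := dim_ker_at_o; lia. Qed.

Lemma zcl_Iorbit_span x : zcl (Iorbit rho o) x -> x \in (<[o]> + <[YT *m o]>)%VS.
Proof.
(* I.o lies in the plane spanned by o and Y_T o, which is Zariski closed. *)
move=> xcl; apply: contrapT => /negP xW.
have [phi [phix phiW]] := separating_row xW; move/eqP: phix; apply.
apply: (zcl_mulmx_eq0 xcl) => _ [t [c [_ ->]]].
rewrite -scalemxAr phiW ?scaler0 // rho_center mulmxDl mul1mx -scalemxAl.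
by rewrite memv_add ?memvZ ?memv_line.
Qed.

Lemma Iorbit_boundary x : x != 0 -> zcl (Iorbit rho o) x -> ~ Iorbit rho o x ->
  exists2 b, b != 0 & x = b *: (YT *m o).
Proof.
move=> x_nz xcl xnI.
have /memv_addP[_ /vlineP[a ->] [_ /vlineP[b ->] xE]] := zcl_Iorbit_span xcl.
have a0 : a = 0.
  apply: contrapT => /eqP a_nz; apply: xnI; exists (b / a), a; split => //.
  by rewrite xE rho_center mulmxDl mul1mx -scalemxAl scalerDr scalerA mulrC mulfVK.
exists b; last by rewrite xE a0 scale0r add0r.
by apply: contraNneq x_nz => b0; rewrite xE a0 b0 !scale0r addr0.
Qed.

Section InducedTautological.
Variables (q : 'M[C]_(n.*2.+1, N)) (L : 'M[C]_(n.*2)) (pt : 'rV[C]_(n.*2.+1)).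
Hypotheses (q_free : row_free q) (qYTo : q *m (YT *m o) = 0)
  (L_unit : L \in unitmx) (psi_q : psi = pt *m q)
  (qL : forall a t, exists c, c != 0 /\ q *m rho (a *m L, t) = c *: (taut a *m q)).

Lemma q_rho g : q *m rho g = taut (g.1 *m invmx L) *m q.
Proof.
case: g => w t; have [c [c_nz qc]] := qL (w *m invmx L) t.
rewrite mulmxKV // in qc; rewrite qc /=.
suff -> : c = 1 by rewrite scale1r.
apply: (unipotent_row_scalar (E := taut_nil (w *m invmx L)) (pt := pt)).
- by apply: contraNneq psi_nz => pt0; rewrite psi_q pt0 mul0mx.
- exact: taut_nil_sq.
apply: (row_free_inj q_free); rewrite /= -tautE -scalemxAl -mulmxA scalemxAr -qc.
by rewrite mulmxA -psi_q psi_rho.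
Qed.

Lemma ker_at_o_trivial a : a \in (A :&: lker at_o)%VS -> a = 0.
Proof.
rewrite memv_cap memv_ker at_oE => /andP[/A_comb[s ->] /eqP so].
have qs : q *m comb s = 0.
  apply: orbit_dense => h; rewrite mulmxA -(mulmxA q) comb_twisted mulmxDr mulmxDl.
  by rewrite -!mulmxA so !mulmx0 add0r -scalemxAl -scalemxAr qYTo !scaler0.
have vs0 : vcomb s = 0.
  have /eqP : (\sum_(p <- s) p.1 *: taut (p.2.1 *m invmx L)) *m q = 0.
    rewrite -qs /comb mulmx_sumr mulmx_suml; apply: eq_bigr => p _.
    by rewrite -scalemxAl -scalemxAr q_rho.
  rewrite mulmx_free_eq0 // => /eqP tsum0.
  (* Column 0 of a tautological matrix carries its translation vector. *)
  have : vcomb s *m invmx L = 0.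
    apply/rowP => k; have /matrixP/(_ (lift ord0 k) ord0) := tsum0.
    rewrite summxE mxE => tk; rewrite [RHS]mxE -tk /vcomb mulmx_suml summxE.
    by apply: eq_bigr => p _; rewrite -scalemxAl [LHS]mxE [RHS]mxE taut_col0.
  by move/(congr1 (mulmxr L)); rewrite /= mulmxKV // mul0mx.
by apply: twisted_ker_eq0 so; rewrite -vs0; exact: comb_twisted.
Qed.

End InducedTautological.

Lemma dimA_taut : induced_tautological rho o -> \dim A = N.
Proof.
case=> vh [vh_nz vh_cl vh_nI [q [qvh rq [L [L_unit qL]]]]].
have [b b_nz vhE] := Iorbit_boundary vh_nz vh_cl vh_nI.
have qYTo : q *m (YT *m o) = 0.
  by move/eqP: qvh; rewrite vhE -scalemxAr scaler_eq0 (negbTE b_nz) => /eqP.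
have psiYTo : psi *m (YT *m o) = 0 by rewrite mulmxA psiYT mul0mx.
have [pt psi_q] := row_sub_corank1 rq YTo_neq0 qYTo psiYTo.
have q_free : row_free q by rewrite /row_free rq.
rewrite dimA_split (_ : \dim _ = 0%N) //; apply/eqP; rewrite dimv_eq0 -subv0.
by apply/subvP => a /(ker_at_o_trivial q_free qYTo L_unit psi_q qL) ->; exact: mem0v.
Qed.

End Representation.

Theorem proposition3p4 (R : realType) (n : nat) (hn : (0 < n)%N)
  (Om : 'M[R[i]]_(n.*2)) (rho : heis R n -> 'M[R[i]]_(n.*2.+2))
  (o : 'cV[R[i]]_(n.*2.+2))
  (hOm : skew_nondeg Om)
  (hH : Hstructure Om rho)
  (ho : open_dense_orbit rho o)
  (hT : T_fixes_boundary rho o)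
  (A : {vspace 'M[R[i]]_(n.*2.+2)})
  (hA : is_assoc_alg rho A) :
  (n.*2.+2 <= \dim A <= 3 * n + 2)%N /\
  (induced_tautological rho o -> \dim A = n.*2.+2).
Proof.
have [Y [D [D_gt1 Y_nil rho_expmx]]] := exists_rho_generators hOm hH.
have [psi [psi_nz psiYT psi_rho]] := exists_fixed_row hOm hH D_gt1 Y_nil rho_expmx.
split; first exact: (dimA_bounds hOm hH D_gt1 Y_nil rho_expmx ho hT psi_nz psiYT psi_rho hA).
exact: (dimA_taut hOm hH D_gt1 Y_nil rho_expmx ho hT psi_nz psiYT psi_rho hA).
Qed.
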